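(* If a solution $(x_1(t),x_2(t),x_3(t))$ of the Ricci flow system $\frac{dx_i}{dt}=-2r_ix_i$ satisfies $x_2(0)>x_1(0)>x_3(0)>0$, then $x_2(t)>x_1(t)>x_3(t)$ for all $t$ in its interval of existence. The same holds for the volume-normalized Ricci flow.
   Context: Here $d\in\{2,4,8\}$. For positive reals $x_1,x_2,x_3$ and $\{i,j,k\}=\{1,2,3\}$, define $$r_i=\frac{d x_i^2-d x_j^2-d x_k^2+(10d-8)x_jx_k}{2x_1x_2x_3}.$$ The Ricci flow of the $G$-invariant metrics $\sum_i x_i\langle\cdot,\cdot\rangle_0|_{V_i}$ on the flag manifolds $G/K$ is the ODE system $\frac{dx_i}{dt}=-2r_ix_i$. *)

From Stdlib Require Import Reals.
Open Scope R_scope.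

Definition ric (d x1 x2 x3 xi xj xk : R) : R :=
  (d * xi ^ 2 - d * xj ^ 2 - d * xk ^ 2 + (10 * d - 8) * xj * xk)
  / (2 * x1 * x2 * x3).

Definition r1 (d x1 x2 x3 : R) : R := ric d x1 x2 x3 x1 x2 x3.
Definition r2 (d x1 x2 x3 : R) : R := ric d x1 x2 x3 x2 x1 x3.
Definition r3 (d x1 x2 x3 : R) : R := ric d x1 x2 x3 x3 x1 x2.

(* Scalar curvature S = sum_i d_i r_i with d_i = dim V_i = d, and
   n = dim G/K = 3d. *)
Definition scal (d x1 x2 x3 : R) : R :=
  d * (r1 d x1 x2 x3 + r2 d x1 x2 x3 + r3 d x1 x2 x3).
Definition dimGK (d : R) : R := 3 * d.

Definition ricci_flow_sol (d a b : R) (x1 x2 x3 : R -> R) : Prop :=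
  forall t, a < t < b ->
    0 < x1 t /\ 0 < x2 t /\ 0 < x3 t /\
    derivable_pt_lim x1 t (-2 * r1 d (x1 t) (x2 t) (x3 t) * x1 t) /\
    derivable_pt_lim x2 t (-2 * r2 d (x1 t) (x2 t) (x3 t) * x2 t) /\
    derivable_pt_lim x3 t (-2 * r3 d (x1 t) (x2 t) (x3 t) * x3 t).

Definition normalized_ricci_flow_sol (d a b : R) (x1 x2 x3 : R -> R) : Prop :=
  forall t, a < t < b ->
    let S := scal d (x1 t) (x2 t) (x3 t) in
    0 < x1 t /\ 0 < x2 t /\ 0 < x3 t /\
    derivable_pt_lim x1 t
      (-2 * r1 d (x1 t) (x2 t) (x3 t) * x1 t + 2 * S / dimGK d * x1 t) /\
    derivable_pt_lim x2 t
      (-2 * r2 d (x1 t) (x2 t) (x3 t) * x2 t + 2 * S / dimGK d * x2 t) /\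
    derivable_pt_lim x3 t
      (-2 * r3 d (x1 t) (x2 t) (x3 t) * x3 t + 2 * S / dimGK d * x3 t).

(* For the Ricci flow x_i' = -2 r_i x_i the velocity difference of two
   components factors through their gap: a direct computation gives
     x_i' - x_j' = (x_i - x_j) * G(x_i, x_j, x_k),
     G(x_i, x_j, x_k) = -d ((x_i + x_j)^2 - x_k^2) / (x_i x_j x_k),
   the mixed term (10d - 8) x_j x_k cancelling.  The volume normalization
   adds the same multiple (2S/n) x_i to every x_i', so it only shifts the
   rate G by 2S/n.  Hence each gap y = x_i - x_j solves a scalar linear ODE
   y' = g(t) y with g continuous along the solution, and such a solution
   never changes sign: y * exp(-∫_0^t g) has zero derivative.

   The argument works for every real d, in particular for d = 2, 4, 8. *)

From Pilot Require Import Defs.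
From Stdlib Require Import Reals Lra.
From Coquelicot Require Import Coquelicot.
Open Scope R_scope.

Section LinearODE.

Variables (a b : R) (g : R -> R).
Hypothesis zero_in_interval : a < 0 < b.
Hypothesis g_continuous : forall t, a < t < b -> continuity_pt g t.

Lemma between_zero_in_interval t x :
  a < t < b -> Rmin 0 t <= x <= Rmax 0 t -> a < x < b.
Proof.
intros Ht Hx; unfold Rmin, Rmax in Hx; destruct (Rle_dec 0 t); lra.
Qed.

Lemma primitive_derivative t :
  a < t < b -> is_derive (fun u => RInt g 0 u) t (g t).
Proof.
intros Ht.
assert (g_cont : forall u, a < u < b -> continuous g u).
{ intros u Hu; apply continuity_pt_filterlim, g_continuous, Hu. }
apply (is_derive_RInt g _ 0); [|now apply g_cont].
assert (Hr : 0 < Rmin (t - a) (b - t)) by (apply Rmin_pos; lra).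
exists (mkposreal _ Hr); intros u Hu.
change (Rabs (u - t) < Rmin (t - a) (b - t)) in Hu.
apply Rabs_def2 in Hu.
pose proof (Rmin_l (t - a) (b - t)); pose proof (Rmin_r (t - a) (b - t)).
apply (@RInt_correct R_CompleteNormedModule).
apply (@ex_RInt_continuous R_CompleteNormedModule); intros z Hz.
apply g_cont, (between_zero_in_interval u); [lra | exact Hz].
Qed.

Lemma zero_derivative_constant (h : R -> R) :
  (forall t, a < t < b -> is_derive h t 0) -> forall t, a < t < b -> h t = h 0.
Proof.
intros Hh t Ht.
destruct (MVT_gen h 0 t (fun _ => 0)) as [c [_ Hc]].
- intros x Hx; apply Hh, (between_zero_in_interval t); [exact Ht | lra].
- intros x Hx; apply derivable_continuous_pt; exists 0.
  apply is_derive_Reals, Hh, (between_zero_in_interval t); assumption.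
- lra.
Qed.

(* Sign preservation: a solution of y' = g y positive at 0 stays positive,
   since the integrating-factor product y * exp(-∫_0 g) is constant. *)
Lemma linear_ode_positive (y : R -> R) :
  (forall t, a < t < b -> derivable_pt_lim y t (y t * g t)) ->
  0 < y 0 -> forall t, a < t < b -> 0 < y t.
Proof.
intros Hy Hy0 t Ht.
set (h := fun u => y u * exp (- RInt g 0 u)).
assert (h_const : h t = h 0).
{ apply zero_derivative_constant; [|exact Ht].
  intros s Hs; apply is_derive_Reals.
  replace 0 with (y s * g s * exp (- RInt g 0 s)
                  + y s * (exp (- RInt g 0 s) * - g s)) by ring.
  apply (derivable_pt_lim_mult y (fun u => exp (- RInt g 0 u))); [now apply Hy|].
  apply (derivable_pt_lim_comp (fun u => - RInt g 0 u) exp);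
    [|apply derivable_pt_lim_exp].
  apply (derivable_pt_lim_opp (fun u => RInt g 0 u)).
  now apply is_derive_Reals, primitive_derivative. }
assert (h_zero : h 0 = y 0).
{ unfold h; rewrite RInt_point; unfold zero; simpl; rewrite Ropp_0, exp_0; ring. }
assert (factor_pos : 0 < exp (- RInt g 0 t)) by apply exp_pos.
unfold h in h_const, h_zero.
destruct (Rle_lt_dec (y t) 0) as [Hneg|]; [|assumption].
assert (y t * exp (- RInt g 0 t) <= 0) by (apply Rmult_le_0_r; lra).
lra.
Qed.

End LinearODE.

Lemma gap_preserved (a b : R) (xi xj vi vj g : R -> R) :
  a < 0 < b ->
  (forall t, a < t < b ->
     derivable_pt_lim xi t (vi t) /\ derivable_pt_lim xj t (vj t) /\
     vi t - vj t = (xi t - xj t) * g t /\ continuity_pt g t) ->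
  xj 0 < xi 0 -> forall t, a < t < b -> xj t < xi t.
Proof.
intros Hab Hflow H0 t Ht.
enough (0 < xi t - xj t) by lra.
apply (linear_ode_positive a b g Hab) with (y := fun u => xi u - xj u);
  [ | | lra | exact Ht].
- intros s Hs; apply (Hflow s Hs).
- intros s Hs; destruct (Hflow s Hs) as (Di & Dj & Hgap & _).
  rewrite <- Hgap; now apply (derivable_pt_lim_minus xi xj).
Qed.

Definition gap_rate (d xi xj xk : R) : R :=
  - d * ((xi + xj) ^ 2 - xk ^ 2) / (xi * xj * xk).

Lemma ricci_velocity_gap_21 d x1 x2 x3 :
  0 < x1 -> 0 < x2 -> 0 < x3 ->
  -2 * r2 d x1 x2 x3 * x2 - -2 * r1 d x1 x2 x3 * x1
  = (x2 - x1) * gap_rate d x2 x1 x3.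
Proof.
intros; unfold r1, r2, ric, gap_rate; field; repeat split; lra.
Qed.

Lemma ricci_velocity_gap_13 d x1 x2 x3 :
  0 < x1 -> 0 < x2 -> 0 < x3 ->
  -2 * r1 d x1 x2 x3 * x1 - -2 * r3 d x1 x2 x3 * x3
  = (x1 - x3) * gap_rate d x1 x3 x2.
Proof.
intros; unfold r1, r3, ric, gap_rate; field; repeat split; lra.
Qed.

Lemma gap_rate_continuous d (xi xj xk : R -> R) s :
  continuity_pt xi s -> continuity_pt xj s -> continuity_pt xk s ->
  0 < xi s -> 0 < xj s -> 0 < xk s ->
  continuity_pt (fun u => gap_rate d (xi u) (xj u) (xk u)) s.
Proof.
intros; unfold gap_rate; reg.
apply Rgt_not_eq; repeat apply Rmult_lt_0_compat; assumption.
Qed.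

Lemma scalar_curvature_continuous d (x1 x2 x3 : R -> R) s :
  continuity_pt x1 s -> continuity_pt x2 s -> continuity_pt x3 s ->
  0 < x1 s -> 0 < x2 s -> 0 < x3 s ->
  continuity_pt (fun u => Defs.scal d (x1 u) (x2 u) (x3 u)) s.
Proof.
intros; unfold Defs.scal, r1, r2, r3, ric; reg;
  apply Rgt_not_eq; repeat apply Rmult_lt_0_compat; lra.
Qed.

Lemma derivable_pt_lim_continuity (f : R -> R) t l :
  derivable_pt_lim f t l -> continuity_pt f t.
Proof. intros Hf; exact (derivable_continuous_pt f t (exist _ l Hf)). Qed.

Lemma ricci_flow_ordering d a b x1 x2 x3 :
  a < 0 < b -> ricci_flow_sol d a b x1 x2 x3 ->
  x1 0 < x2 0 -> x3 0 < x1 0 ->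
  forall t, a < t < b -> x1 t < x2 t /\ x3 t < x1 t.
Proof.
intros Hab Hsol H21 H13 t Ht; split.
- apply (gap_preserved a b x2 x1
    (fun u => -2 * r2 d (x1 u) (x2 u) (x3 u) * x2 u)
    (fun u => -2 * r1 d (x1 u) (x2 u) (x3 u) * x1 u)
    (fun u => gap_rate d (x2 u) (x1 u) (x3 u))); try assumption.
  intros s Hs; destruct (Hsol s Hs) as (P1 & P2 & P3 & D1 & D2 & D3).
  repeat split; try assumption; [now apply ricci_velocity_gap_21|].
  apply gap_rate_continuous; try assumption;
    eapply derivable_pt_lim_continuity; eassumption.
- apply (gap_preserved a b x1 x3
    (fun u => -2 * r1 d (x1 u) (x2 u) (x3 u) * x1 u)
    (fun u => -2 * r3 d (x1 u) (x2 u) (x3 u) * x3 u)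
    (fun u => gap_rate d (x1 u) (x3 u) (x2 u))); try assumption.
  intros s Hs; destruct (Hsol s Hs) as (P1 & P2 & P3 & D1 & D2 & D3).
  repeat split; try assumption; [now apply ricci_velocity_gap_13|].
  apply gap_rate_continuous; try assumption;
    eapply derivable_pt_lim_continuity; eassumption.
Qed.

Lemma normalized_velocity_gap (vi vj xi xj rate shift : R) :
  vi - vj = (xi - xj) * rate ->
  (vi + shift * xi) - (vj + shift * xj) = (xi - xj) * (rate + shift).
Proof. intros H; rewrite Rmult_plus_distr_l, <- H; ring. Qed.

Lemma normalized_ricci_flow_ordering d a b x1 x2 x3 :
  a < 0 < b -> normalized_ricci_flow_sol d a b x1 x2 x3 ->
  x1 0 < x2 0 -> x3 0 < x1 0 ->
  forall t, a < t < b -> x1 t < x2 t /\ x3 t < x1 t.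
Proof.
intros Hab Hsol H21 H13 t Ht.
set (shift := fun u => 2 * Defs.scal d (x1 u) (x2 u) (x3 u) / dimGK d).
assert (shift_continuous : forall s, a < s < b -> continuity_pt shift s).
{ intros s Hs; destruct (Hsol s Hs) as (P1 & P2 & P3 & D1 & D2 & D3).
  assert (Cscal : continuity_pt (fun u => Defs.scal d (x1 u) (x2 u) (x3 u)) s).
  { apply scalar_curvature_continuous; try assumption;
      eapply derivable_pt_lim_continuity; eassumption. }
  unfold shift, Rdiv.
  apply (continuity_pt_mult (fun u => 2 * Defs.scal d (x1 u) (x2 u) (x3 u))
                            (fun _ => / dimGK d)).
  - exact (continuity_pt_scal _ 2 s Cscal).
  - apply continuity_pt_const; intros ? ?; reflexivity. }
split.
- apply (gap_preserved a b x2 x1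
    (fun u => -2 * r2 d (x1 u) (x2 u) (x3 u) * x2 u + shift u * x2 u)
    (fun u => -2 * r1 d (x1 u) (x2 u) (x3 u) * x1 u + shift u * x1 u)
    (fun u => gap_rate d (x2 u) (x1 u) (x3 u) + shift u)); try assumption.
  intros s Hs; pose proof (shift_continuous s Hs) as Cs.
  destruct (Hsol s Hs) as (P1 & P2 & P3 & D1 & D2 & D3).
  repeat split; try assumption.
  + now apply normalized_velocity_gap, ricci_velocity_gap_21.
  + apply (continuity_pt_plus (fun u => gap_rate d (x2 u) (x1 u) (x3 u)));
      [|exact Cs].
    apply gap_rate_continuous; try assumption;
      eapply derivable_pt_lim_continuity; eassumption.
- apply (gap_preserved a b x1 x3
    (fun u => -2 * r1 d (x1 u) (x2 u) (x3 u) * x1 u + shift u * x1 u)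
    (fun u => -2 * r3 d (x1 u) (x2 u) (x3 u) * x3 u + shift u * x3 u)
    (fun u => gap_rate d (x1 u) (x3 u) (x2 u) + shift u)); try assumption.
  intros s Hs; pose proof (shift_continuous s Hs) as Cs.
  destruct (Hsol s Hs) as (P1 & P2 & P3 & D1 & D2 & D3).
  repeat split; try assumption.
  + now apply normalized_velocity_gap, ricci_velocity_gap_13.
  + apply (continuity_pt_plus (fun u => gap_rate d (x1 u) (x3 u) (x2 u)));
      [|exact Cs].
    apply gap_rate_continuous; try assumption;
      eapply derivable_pt_lim_continuity; eassumption.
Qed.

Theorem mainTheorem8 :
  forall (d : R), (d = 2 \/ d = 4 \/ d = 8) ->
  (forall (a b : R) (x1 x2 x3 : R -> R),
     a < 0 < b ->
     ricci_flow_sol d a b x1 x2 x3 ->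
     x2 0 > x1 0 /\ x1 0 > x3 0 /\ x3 0 > 0 ->
     forall t, a < t < b -> x2 t > x1 t /\ x1 t > x3 t) /\
  (forall (a b : R) (x1 x2 x3 : R -> R),
     a < 0 < b ->
     normalized_ricci_flow_sol d a b x1 x2 x3 ->
     x2 0 > x1 0 /\ x1 0 > x3 0 /\ x3 0 > 0 ->
     forall t, a < t < b -> x2 t > x1 t /\ x1 t > x3 t).
Proof.
intros d _; split; intros a b x1 x2 x3 Hab Hsol (H21 & H13 & _).
- exact (ricci_flow_ordering d a b x1 x2 x3 Hab Hsol H21 H13).
- exact (normalized_ricci_flow_ordering d a b x1 x2 x3 Hab Hsol H21 H13).
Qed.
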